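(* Let $\Omega\subseteq\mathbb{R}^3$ be a domain and let $f_0\colon\Omega\to\mathbb{R}$ be a real-valued (twice differentiable) function which is inframonogenic, i.e. $\overline{\partial} f_0\overline{\partial}=0$. Then locally one has \[ f_0(x_0,x_1,x_2)=c_0(2x_0^2+x_1^2+x_2^2)+c_1x_0+c_2+h(x_1,x_2),\] where $c_0,c_1,c_2\in\mathbb{R}$ are constants and $h$ is a harmonic function of the two variables $(x_1,x_2)$.
   Context: $\mathbb{H}$ denotes the real quaternions with basis $e_0=1,e_1,e_2,e_3$ and $e_1^2=e_2^2=e_3^2=e_1e_2e_3=-1$; points of $\mathbb{R}^3$ are $x=x_0+x_1e_1+x_2e_2$. With $\partial_i=\partial/\partial x_i$, $\overline{\partial} g=\partial_0 g+e_1\partial_1 g+e_2\partial_2 g$ (left action), $g\overline{\partial}=\partial_0 g+(\partial_1 g)e_1+(\partial_2 g)e_2$ (right action), and $\overline{\partial} g\overline{\partial}:=\overline{\partial}(g\overline{\partial})$. ''Locally'' means in a suitable neighborhood of each point of $\Omega$. *)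

From Stdlib Require Import Reals.
From Coquelicot Require Import Coquelicot.
Open Scope R_scope.

Record quat := Q { q0 : R; q1 : R; q2 : R; q3 : R }.

Definition qzero : quat := Q 0 0 0 0.
Definition qreal (a : R) : quat := Q a 0 0 0.
Definition qe1 : quat := Q 0 1 0 0.
Definition qe2 : quat := Q 0 0 1 0.
Definition qadd (a b : quat) : quat :=
  Q (q0 a + q0 b) (q1 a + q1 b) (q2 a + q2 b) (q3 a + q3 b).
(* Hamilton product: e1 e2 = e3, e2 e3 = e1, e3 e1 = e2 *)
Definition qmul (a b : quat) : quat :=
  Q (q0 a * q0 b - q1 a * q1 b - q2 a * q2 b - q3 a * q3 b)
    (q0 a * q1 b + q1 a * q0 b + q2 a * q3 b - q3 a * q2 b)
    (q0 a * q2 b - q1 a * q3 b + q2 a * q0 b + q3 a * q1 b)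
    (q0 a * q3 b + q1 a * q2 b - q2 a * q1 b + q3 a * q0 b).

(** * Functions on R^3, points x = x0 + x1 e1 + x2 e2 written as (x0,x1,x2) *)
Definition d0 (f : R -> R -> R -> R) : R -> R -> R -> R :=
  fun x0 x1 x2 => Derive (fun t => f t x1 x2) x0.
Definition d1 (f : R -> R -> R -> R) : R -> R -> R -> R :=
  fun x0 x1 x2 => Derive (fun t => f x0 t x2) x1.
Definition d2 (f : R -> R -> R -> R) : R -> R -> R -> R :=
  fun x0 x1 x2 => Derive (fun t => f x0 x1 t) x2.

Definition qd (d : (R -> R -> R -> R) -> R -> R -> R -> R)
  (g : R -> R -> R -> quat) : R -> R -> R -> quat :=
  fun x0 x1 x2 =>
    Q (d (fun a b c => q0 (g a b c)) x0 x1 x2)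
      (d (fun a b c => q1 (g a b c)) x0 x1 x2)
      (d (fun a b c => q2 (g a b c)) x0 x1 x2)
      (d (fun a b c => q3 (g a b c)) x0 x1 x2).

Definition dbar_left (g : R -> R -> R -> quat) : R -> R -> R -> quat :=
  fun x0 x1 x2 =>
    qadd (qd d0 g x0 x1 x2)
      (qadd (qmul qe1 (qd d1 g x0 x1 x2)) (qmul qe2 (qd d2 g x0 x1 x2))).

Definition dbar_right (g : R -> R -> R -> quat) : R -> R -> R -> quat :=
  fun x0 x1 x2 =>
    qadd (qd d0 g x0 x1 x2)
      (qadd (qmul (qd d1 g x0 x1 x2) qe1) (qmul (qd d2 g x0 x1 x2) qe2)).

Definition dbar_both (g : R -> R -> R -> quat) : R -> R -> R -> quat :=
  dbar_left (dbar_right g).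

(** * Topology of R^3 (max-norm balls; same topology as Euclidean) *)
Definition ball3 (p0 p1 p2 r : R) (x0 x1 x2 : R) : Prop :=
  Rabs (x0 - p0) < r /\ Rabs (x1 - p1) < r /\ Rabs (x2 - p2) < r.

Definition open3 (U : R -> R -> R -> Prop) : Prop :=
  forall p0 p1 p2, U p0 p1 p2 ->
    exists r, 0 < r /\ forall x0 x1 x2, ball3 p0 p1 p2 r x0 x1 x2 -> U x0 x1 x2.

Definition domain3 (Om : R -> R -> R -> Prop) : Prop :=
  open3 Om /\ (exists p0 p1 p2, Om p0 p1 p2) /\
  forall A B : R -> R -> R -> Prop, open3 A -> open3 B ->
    (forall x0 x1 x2, Om x0 x1 x2 -> A x0 x1 x2 \/ B x0 x1 x2) ->
    (forall x0 x1 x2, Om x0 x1 x2 -> ~ (A x0 x1 x2 /\ B x0 x1 x2)) ->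
    (exists x0 x1 x2, Om x0 x1 x2 /\ A x0 x1 x2) ->
    (exists x0 x1 x2, Om x0 x1 x2 /\ B x0 x1 x2) -> False.

Definition continuous3_at (F : R -> R -> R -> R) (p0 p1 p2 : R) : Prop :=
  forall eps, 0 < eps -> exists del, 0 < del /\
    forall x0 x1 x2, ball3 p0 p1 p2 del x0 x1 x2 ->
      Rabs (F x0 x1 x2 - F p0 p1 p2) < eps.

Definition C2_on3 (Om : R -> R -> R -> Prop) (f : R -> R -> R -> R) : Prop :=
  forall p0 p1 p2, Om p0 p1 p2 ->
    continuous3_at f p0 p1 p2 /\
    (forall d, (d = d0 \/ d = d1 \/ d = d2) ->
       ex_derive (fun t => f t p1 p2) p0 /\
       ex_derive (fun t => f p0 t p2) p1 /\
       ex_derive (fun t => f p0 p1 t) p2 /\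
       continuous3_at (d f) p0 p1 p2 /\
       ex_derive (fun t => d f t p1 p2) p0 /\
       ex_derive (fun t => d f p0 t p2) p1 /\
       ex_derive (fun t => d f p0 p1 t) p2 /\
       (forall d', (d' = d0 \/ d' = d1 \/ d' = d2) ->
          continuous3_at (d' (d f)) p0 p1 p2)).

Definition e1_2 (h : R -> R -> R) : R -> R -> R :=
  fun y1 y2 => Derive (fun t => h t y2) y1.
Definition e2_2 (h : R -> R -> R) : R -> R -> R :=
  fun y1 y2 => Derive (fun t => h y1 t) y2.

Definition continuous2_at (F : R -> R -> R) (p1 p2 : R) : Prop :=
  forall eps, 0 < eps -> exists del, 0 < del /\
    forall y1 y2, Rabs (y1 - p1) < del -> Rabs (y2 - p2) < del ->
      Rabs (F y1 y2 - F p1 p2) < eps.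

Definition harmonic_on2 (V : R -> R -> Prop) (h : R -> R -> R) : Prop :=
  (forall p1 p2, V p1 p2 -> exists r, 0 < r /\
     forall y1 y2, Rabs (y1 - p1) < r -> Rabs (y2 - p2) < r -> V y1 y2) /\
  (forall p1 p2, V p1 p2 ->
    continuous2_at h p1 p2 /\
    (forall d, (d = e1_2 \/ d = e2_2) ->
       ex_derive (fun t => h t p2) p1 /\
       ex_derive (fun t => h p1 t) p2 /\
       continuous2_at (d h) p1 p2 /\
       ex_derive (fun t => d h t p2) p1 /\
       ex_derive (fun t => d h p1 t) p2 /\
       (forall d', (d' = e1_2 \/ d' = e2_2) -> continuous2_at (d' (d h)) p1 p2)) /\
    e1_2 (e1_2 h) p1 p2 + e2_2 (e2_2 h) p1 p2 = 0).

(** For a real function f the four components of dbar f dbar are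
    f00 - f11 - f22, f01 + f10, f02 + f20 and f12 - f21, so by the symmetry of
    second derivatives f is inframonogenic iff f01 = f02 = 0 and f00 = f11 + f22.
    On a cube around a point of the domain the first two equations make f split
    as u(x0) + g(x1, x2), and then u''(x0) = (g11 + g22)(x1, x2) forces both sides
    to be one constant K.  Hence u is a quadratic polynomial with u'' = K, and
    g - K/4 (x1^2 + x2^2) is harmonic. *)

From Pilot Require Import Defs.
From Stdlib Require Import Reals Lra FunctionalExtensionality.
From Coquelicot Require Import Coquelicot.
(* Coquelicot also defines [d1]; re-importing Defs restores its partial derivatives. *)
Import Defs.
Open Scope R_scope.

Lemma dbar_right_real (F : R -> R -> R -> R) :
  dbar_right (fun a b c => qreal (F a b c)) =
  fun a b c => Q (d0 F a b c) (d1 F a b c) (d2 F a b c) 0.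
Proof.
  do 3 (apply functional_extensionality; intro).
  unfold dbar_right, qd, qadd, qmul, qreal, qe1, qe2, d0, d1, d2; cbn [q0 q1 q2 q3].
  rewrite !Derive_const; f_equal; ring.
Qed.

Lemma dbar_both_real (F : R -> R -> R -> R) (x0 x1 x2 : R) :
  dbar_both (fun a b c => qreal (F a b c)) x0 x1 x2 =
  Q (d0 (d0 F) x0 x1 x2 - d1 (d1 F) x0 x1 x2 - d2 (d2 F) x0 x1 x2)
    (d0 (d1 F) x0 x1 x2 + d1 (d0 F) x0 x1 x2)
    (d0 (d2 F) x0 x1 x2 + d2 (d0 F) x0 x1 x2)
    (d1 (d2 F) x0 x1 x2 - d2 (d1 F) x0 x1 x2).
Proof.
  unfold dbar_both, dbar_left; rewrite dbar_right_real.
  unfold qd, qadd, qmul, qe1, qe2, d0, d1, d2; cbn [q0 q1 q2 q3].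
  rewrite !Derive_const; f_equal; ring.
Qed.

Lemma is_derive_Rminus (f g : R -> R) (x df dg : R) :
  is_derive f x df -> is_derive g x dg -> is_derive (fun t => f t - g t) x (df - dg).
Proof. exact (is_derive_minus f g x df dg). Qed.

Lemma Rabs_lt_shift (u y p r : R) : Rabs (u - y) < r - Rabs (y - p) -> Rabs (u - p) < r.
Proof.
  intro H. pose proof (Rabs_triang (u - y) (y - p)) as T.
  replace (u - y + (y - p)) with (u - p) in T by ring. lra.
Qed.

Lemma locally_Rabs_lt (a r x : R) :
  Rabs (x - a) < r -> locally x (fun t => Rabs (t - a) < r).
Proof.
  intro Hx. assert (Hd : 0 < r - Rabs (x - a)) by lra.
  exists (mkposreal _ Hd). intros t Ht. exact (Rabs_lt_shift t x a r Ht).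
Qed.

Lemma is_derive_0_const (g : R -> R) (a r b : R) :
  (forall t, Rabs (t - a) < r -> is_derive g t 0) -> Rabs (b - a) < r -> g b = g a.
Proof.
  intros Hg Hb.
  destruct (MVT_cor4 g (fun _ => 0) a (Rabs (b - a))) with (b := b) as [c [Hc _]];
    [intros c Hc; apply Hg; lra | lra | lra].
Qed.

Lemma increment_eq_of_is_derive (f g df : R -> R) (a r b : R) :
  (forall t, Rabs (t - a) < r -> is_derive f t (df t)) ->
  (forall t, Rabs (t - a) < r -> is_derive g t (df t)) ->
  Rabs (b - a) < r -> f b - f a = g b - g a.
Proof.
  intros Hf Hg Hb.
  assert (E : (fun t => f t - g t) b = (fun t => f t - g t) a).
  { apply (is_derive_0_const (fun t => f t - g t) a r b); [|exact Hb].
    intros t Ht. replace 0 with (df t - df t) by ring.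
    exact (is_derive_Rminus f g t _ _ (Hf t Ht) (Hg t Ht)). }
  cbv beta in E. lra.
Qed.

Lemma taylor_const_second_derive (u u' : R -> R) (a r K b : R) :
  (forall t, Rabs (t - a) < r -> is_derive u t (u' t)) ->
  (forall t, Rabs (t - a) < r -> is_derive u' t K) ->
  Rabs (b - a) < r -> u b = u a + u' a * (b - a) + K / 2 * (b - a) ^ 2.
Proof.
  intros Hu Hu' Hb.
  assert (Hlin : forall t, Rabs (t - a) < r -> u' t = u' a + K * (t - a)).
  { intros t Ht.
    assert (E := increment_eq_of_is_derive u' (fun s => K * (s - a)) (fun _ => K) a r t Hu'
                   ltac:(intros; cbv beta; auto_derive; auto; ring) Ht).
    cbv beta in E. lra. }
  assert (E := increment_eq_of_is_derive u (fun s => u' a * (s - a) + K / 2 * (s - a) ^ 2) u'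
                 a r b Hu ltac:(intros t Ht; rewrite (Hlin t Ht); auto_derive; auto; field) Hb).
  cbv beta in E. lra.
Qed.

Definition C1_at3 (G : R -> R -> R -> R) (x0 x1 x2 : R) : Prop :=
  continuous3_at G x0 x1 x2 /\
  ex_derive (fun t => G t x1 x2) x0 /\ ex_derive (fun t => G x0 t x2) x1 /\
  ex_derive (fun t => G x0 x1 t) x2 /\
  continuous3_at (d0 G) x0 x1 x2 /\ continuous3_at (d1 G) x0 x1 x2 /\
  continuous3_at (d2 G) x0 x1 x2.

Lemma C2_on3_C1_at3 (Om : R -> R -> R -> Prop) (F : R -> R -> R -> R) (x0 x1 x2 : R) :
  C2_on3 Om F -> Om x0 x1 x2 ->
  C1_at3 F x0 x1 x2 /\ C1_at3 (d0 F) x0 x1 x2 /\ C1_at3 (d1 F) x0 x1 x2 /\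
  C1_at3 (d2 F) x0 x1 x2.
Proof.
  intros HC Hx. destruct (HC _ _ _ Hx) as [Hcont Hd].
  destruct (Hd d0 (or_introl eq_refl)) as (E0 & E1 & E2 & C0 & E00 & E01 & E02 & C0').
  destruct (Hd d1 (or_intror (or_introl eq_refl))) as (_ & _ & _ & C1 & E10 & E11 & E12 & C1').
  destruct (Hd d2 (or_intror (or_intror eq_refl))) as (_ & _ & _ & C2 & E20 & E21 & E22 & C2').
  repeat split; auto.
Qed.

Lemma C1_at3_is_derive (G : R -> R -> R -> R) (x0 x1 x2 : R) :
  C1_at3 G x0 x1 x2 ->
  is_derive (fun t => G t x1 x2) x0 (d0 G x0 x1 x2) /\
  is_derive (fun t => G x0 t x2) x1 (d1 G x0 x1 x2) /\
  is_derive (fun t => G x0 x1 t) x2 (d2 G x0 x1 x2).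
Proof. intros (_ & E0 & E1 & E2 & _); repeat split; apply Derive_correct; assumption. Qed.

Lemma continuous3_at_slices (G : R -> R -> R -> R) (x0 x1 x2 : R) :
  continuous3_at G x0 x1 x2 ->
  continuity_2d_pt (fun u v => G u v x2) x0 x1 /\
  continuity_2d_pt (fun u v => G u x1 v) x0 x2 /\
  continuity_2d_pt (G x0) x1 x2.
Proof.
  intros HG.
  split; [|split]; intros eps; destruct (HG eps (cond_pos eps)) as [del [Hdel Hball]];
    exists (mkposreal del Hdel); intros u v Hu Hv; apply Hball; unfold ball3;
    rewrite ?Rminus_eq_0, ?Rabs_R0; repeat split; assumption.
Qed.

Lemma C2_on3_mono (U Om : R -> R -> R -> Prop) (F : R -> R -> R -> R) :
  (forall x0 x1 x2, U x0 x1 x2 -> Om x0 x1 x2) -> C2_on3 Om F -> C2_on3 U F.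
Proof. intros HU HC x0 x1 x2 Hx. exact (HC _ _ _ (HU _ _ _ Hx)). Qed.

Section MixedPartials.
Variables (Om : R -> R -> R -> Prop) (F : R -> R -> R -> R).
Hypothesis HO : open3 Om.
Hypothesis HC : C2_on3 Om F.

Lemma C2_on3_d01_comm (x0 x1 x2 : R) :
  Om x0 x1 x2 -> d0 (d1 F) x0 x1 x2 = d1 (d0 F) x0 x1 x2.
Proof.
  intro Hx. destruct (HO _ _ _ Hx) as [r [Hr Hball]].
  destruct (C2_on3_C1_at3 _ _ _ _ _ HC Hx) as (_ & (_ & _ & _ & _ & _ & C01 & _)
                                                & (_ & _ & _ & _ & C10 & _) & _).
  apply (Schwarz (fun u v => F u v x2)).
  - exists (mkposreal r Hr). intros u v Hu Hv.
    assert (Huv : Om u v x2).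
    { apply Hball. unfold ball3. rewrite Rminus_eq_0, Rabs_R0. repeat split; assumption. }
    destruct (C2_on3_C1_at3 _ _ _ _ _ HC Huv) as ((_ & E0 & E1 & _) & (_ & _ & E01 & _)
                                                 & (_ & E10 & _) & _).
    repeat split; assumption.
  - exact (proj1 (continuous3_at_slices _ _ _ _ C10)).
  - exact (proj1 (continuous3_at_slices _ _ _ _ C01)).
Qed.

Lemma C2_on3_d02_comm (x0 x1 x2 : R) :
  Om x0 x1 x2 -> d0 (d2 F) x0 x1 x2 = d2 (d0 F) x0 x1 x2.
Proof.
  intro Hx. destruct (HO _ _ _ Hx) as [r [Hr Hball]].
  destruct (C2_on3_C1_at3 _ _ _ _ _ HC Hx) as (_ & (_ & _ & _ & _ & _ & _ & C02)
                                                & _ & (_ & _ & _ & _ & C20 & _)).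
  apply (Schwarz (fun u v => F u x1 v)).
  - exists (mkposreal r Hr). intros u v Hu Hv.
    assert (Huv : Om u x1 v).
    { apply Hball. unfold ball3. rewrite (Rminus_eq_0 x1), Rabs_R0. repeat split; assumption. }
    destruct (C2_on3_C1_at3 _ _ _ _ _ HC Huv) as ((_ & E0 & _ & E2 & _) & (_ & _ & _ & E02 & _)
                                                 & _ & (_ & E20 & _)).
    repeat split; assumption.
  - exact (proj1 (proj2 (continuous3_at_slices _ _ _ _ C20))).
  - exact (proj1 (proj2 (continuous3_at_slices _ _ _ _ C02))).
Qed.

End MixedPartials.

Definition inframonogenic_system (F : R -> R -> R -> R) (x0 x1 x2 : R) : Prop :=
  d1 (d0 F) x0 x1 x2 = 0 /\ d2 (d0 F) x0 x1 x2 = 0 /\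
  d0 (d1 F) x0 x1 x2 = 0 /\ d0 (d2 F) x0 x1 x2 = 0 /\
  d0 (d0 F) x0 x1 x2 = d1 (d1 F) x0 x1 x2 + d2 (d2 F) x0 x1 x2.

Lemma inframonogenic_real_system (Om : R -> R -> R -> Prop) (F : R -> R -> R -> R)
    (x0 x1 x2 : R) :
  open3 Om -> C2_on3 Om F -> Om x0 x1 x2 ->
  dbar_both (fun a b c => qreal (F a b c)) x0 x1 x2 = qzero ->
  inframonogenic_system F x0 x1 x2.
Proof.
  intros HO HC Hx H.
  rewrite dbar_both_real in H. injection H as E0 E1 E2 _.
  pose proof (C2_on3_d01_comm Om F HO HC _ _ _ Hx).
  pose proof (C2_on3_d02_comm Om F HO HC _ _ _ Hx).
  repeat split; lra.
Qed.

Definition open2 (V : R -> R -> Prop) : Prop :=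
  forall y1 y2, V y1 y2 -> locally_2d V y1 y2.

Definition C1_on2 (V : R -> R -> Prop) (h : R -> R -> R) : Prop :=
  forall y1 y2, V y1 y2 ->
    continuity_2d_pt h y1 y2 /\
    ex_derive (fun t => h t y2) y1 /\ ex_derive (fun t => h y1 t) y2 /\
    continuity_2d_pt (e1_2 h) y1 y2 /\ continuity_2d_pt (e2_2 h) y1 y2.

Definition C2_on2 (V : R -> R -> Prop) (h : R -> R -> R) : Prop :=
  C1_on2 V h /\ C1_on2 V (e1_2 h) /\ C1_on2 V (e2_2 h).

Definition laplacian2 (h : R -> R -> R) (y1 y2 : R) : R :=
  e1_2 (e1_2 h) y1 y2 + e2_2 (e2_2 h) y1 y2.

Lemma continuous2_at_continuity_2d_pt (h : R -> R -> R) (y1 y2 : R) :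
  continuity_2d_pt h y1 y2 -> continuous2_at h y1 y2.
Proof.
  intros H eps Heps. destruct (H (mkposreal eps Heps)) as [del Hdel].
  exists del. split; [apply cond_pos | exact Hdel].
Qed.

Lemma harmonic_on2_intro (V : R -> R -> Prop) (h : R -> R -> R) :
  open2 V -> C2_on2 V h -> (forall y1 y2, V y1 y2 -> laplacian2 h y1 y2 = 0) ->
  harmonic_on2 V h.
Proof.
  intros HV (Hh & Hh1 & Hh2) Hlap. split.
  - intros y1 y2 Hy. destruct (HV _ _ Hy) as [del Hdel].
    exists del. split; [apply cond_pos | exact Hdel].
  - intros y1 y2 Hy.
    destruct (Hh _ _ Hy) as (C & D1 & D2 & C1 & C2).
    destruct (Hh1 _ _ Hy) as (_ & D11 & D12 & C11 & C12).
    destruct (Hh2 _ _ Hy) as (_ & D21 & D22 & C21 & C22).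
    split; [|split; [|exact (Hlap _ _ Hy)]].
    + exact (continuous2_at_continuity_2d_pt _ _ _ C).
    + intros d [-> | ->]; (repeat split; try assumption);
        try (intros d' [-> | ->]); apply continuous2_at_continuity_2d_pt; assumption.
Qed.

Section OpenSet2.
Variable V : R -> R -> Prop.
Hypothesis HV : open2 V.

Lemma partial2_ext_on (A B : R -> R -> R) :
  (forall y1 y2, V y1 y2 -> A y1 y2 = B y1 y2) ->
  forall y1 y2, V y1 y2 -> e1_2 A y1 y2 = e1_2 B y1 y2 /\ e2_2 A y1 y2 = e2_2 B y1 y2.
Proof.
  intros E y1 y2 Hy. split; apply Derive_ext_loc.
  - generalize (locally_2d_1d_const_y _ _ _ (HV _ _ Hy)); apply filter_imp; auto.
  - generalize (locally_2d_1d_const_x _ _ _ (HV _ _ Hy)); apply filter_imp; auto.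
Qed.

Lemma continuity_2d_pt_ext_on (A B : R -> R -> R) (y1 y2 : R) :
  (forall u v, V u v -> A u v = B u v) -> V y1 y2 ->
  continuity_2d_pt B y1 y2 -> continuity_2d_pt A y1 y2.
Proof.
  intros E Hy. apply continuity_2d_pt_ext_loc.
  apply (locally_2d_impl V); [|exact (HV _ _ Hy)].
  apply locally_2d_forall. intros u v Huv. symmetry. exact (E _ _ Huv).
Qed.

Lemma C1_on2_ext (A B : R -> R -> R) :
  (forall y1 y2, V y1 y2 -> A y1 y2 = B y1 y2) -> C1_on2 V B -> C1_on2 V A.
Proof.
  intros E HB y1 y2 Hy.
  destruct (HB _ _ Hy) as (C & D1 & D2 & C1 & C2).
  assert (E' := partial2_ext_on A B E).
  repeat split.
  - exact (continuity_2d_pt_ext_on A B _ _ E Hy C).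
  - apply (ex_derive_ext_loc (fun t => B t y2)); [|exact D1].
    generalize (locally_2d_1d_const_y _ _ _ (HV _ _ Hy)); apply filter_imp.
    intros t Ht. symmetry. exact (E _ _ Ht).
  - apply (ex_derive_ext_loc (fun t => B y1 t)); [|exact D2].
    generalize (locally_2d_1d_const_x _ _ _ (HV _ _ Hy)); apply filter_imp.
    intros t Ht. symmetry. exact (E _ _ Ht).
  - apply (continuity_2d_pt_ext_on _ (e1_2 B)); [|exact Hy|exact C1].
    intros u v Huv. exact (proj1 (E' _ _ Huv)).
  - apply (continuity_2d_pt_ext_on _ (e2_2 B)); [|exact Hy|exact C2].
    intros u v Huv. exact (proj2 (E' _ _ Huv)).
Qed.

Lemma partial2_minus_on (A B : R -> R -> R) :
  C1_on2 V A -> C1_on2 V B -> forall y1 y2, V y1 y2 ->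
  e1_2 (fun u v => A u v - B u v) y1 y2 = e1_2 A y1 y2 - e1_2 B y1 y2 /\
  e2_2 (fun u v => A u v - B u v) y1 y2 = e2_2 A y1 y2 - e2_2 B y1 y2.
Proof.
  intros HA HB y1 y2 Hy.
  destruct (HA _ _ Hy) as (_ & DA1 & DA2 & _), (HB _ _ Hy) as (_ & DB1 & DB2 & _).
  split; apply Derive_minus; assumption.
Qed.

Lemma C1_on2_minus (A B : R -> R -> R) :
  C1_on2 V A -> C1_on2 V B -> C1_on2 V (fun u v => A u v - B u v).
Proof.
  intros HA HB y1 y2 Hy.
  destruct (HA _ _ Hy) as (CA & DA1 & DA2 & CA1 & CA2).
  destruct (HB _ _ Hy) as (CB & DB1 & DB2 & CB1 & CB2).
  assert (E := partial2_minus_on A B HA HB).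
  repeat split.
  - apply continuity_2d_pt_minus; assumption.
  - exact (ex_derive_minus (fun t => A t y2) (fun t => B t y2) y1 DA1 DB1).
  - exact (ex_derive_minus (fun t => A y1 t) (fun t => B y1 t) y2 DA2 DB2).
  - apply (continuity_2d_pt_ext_on _ (fun u v => e1_2 A u v - e1_2 B u v));
      [intros u v Huv; exact (proj1 (E _ _ Huv)) | exact Hy |].
    apply continuity_2d_pt_minus; assumption.
  - apply (continuity_2d_pt_ext_on _ (fun u v => e2_2 A u v - e2_2 B u v));
      [intros u v Huv; exact (proj2 (E _ _ Huv)) | exact Hy |].
    apply continuity_2d_pt_minus; assumption.
Qed.

Lemma C2_on2_minus (A B : R -> R -> R) :
  C2_on2 V A -> C2_on2 V B -> C2_on2 V (fun u v => A u v - B u v).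
Proof.
  intros (HA & HA1 & HA2) (HB & HB1 & HB2).
  assert (E := partial2_minus_on A B HA HB).
  split; [|split].
  - apply C1_on2_minus; assumption.
  - apply (C1_on2_ext _ (fun u v => e1_2 A u v - e1_2 B u v));
      [intros u v Huv; exact (proj1 (E _ _ Huv)) | apply C1_on2_minus; assumption].
  - apply (C1_on2_ext _ (fun u v => e2_2 A u v - e2_2 B u v));
      [intros u v Huv; exact (proj2 (E _ _ Huv)) | apply C1_on2_minus; assumption].
Qed.

Lemma laplacian2_minus (A B : R -> R -> R) :
  C2_on2 V A -> C2_on2 V B -> forall y1 y2, V y1 y2 ->
  laplacian2 (fun u v => A u v - B u v) y1 y2 = laplacian2 A y1 y2 - laplacian2 B y1 y2.
Proof.
  intros (HA & HA1 & HA2) (HB & HB1 & HB2) y1 y2 Hy.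
  assert (E := partial2_minus_on A B HA HB).
  destruct (partial2_ext_on _ (fun u v => e1_2 A u v - e1_2 B u v)
              (fun u v Huv => proj1 (E u v Huv)) _ _ Hy) as [E11 _].
  destruct (partial2_ext_on _ (fun u v => e2_2 A u v - e2_2 B u v)
              (fun u v Huv => proj2 (E u v Huv)) _ _ Hy) as [_ E22].
  unfold laplacian2. rewrite E11, E22.
  rewrite (proj1 (partial2_minus_on _ _ HA1 HB1 _ _ Hy)),
          (proj2 (partial2_minus_on _ _ HA2 HB2 _ _ Hy)).
  ring.
Qed.

End OpenSet2.

Lemma open2_square (p1 p2 r : R) :
  open2 (fun y1 y2 => Rabs (y1 - p1) < r /\ Rabs (y2 - p2) < r).
Proof.
  intros y1 y2 [H1 H2].
  assert (Hdel : 0 < Rmin (r - Rabs (y1 - p1)) (r - Rabs (y2 - p2)))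
    by (apply Rmin_glb_lt; lra).
  pose proof (Rmin_l (r - Rabs (y1 - p1)) (r - Rabs (y2 - p2))).
  pose proof (Rmin_r (r - Rabs (y1 - p1)) (r - Rabs (y2 - p2))).
  exists (mkposreal _ Hdel). simpl. intros u v Hu Hv.
  split; [apply (Rabs_lt_shift u y1) | apply (Rabs_lt_shift v y2)]; lra.
Qed.

Definition quadratic2 (c y1 y2 : R) : R := c * (y1 * y1 + y2 * y2).

Lemma C1_on2_of_is_derive (V : R -> R -> Prop) (h h1 h2 : R -> R -> R) :
  (forall y1 y2, is_derive (fun t => h t y2) y1 (h1 y1 y2)) ->
  (forall y1 y2, is_derive (fun t => h y1 t) y2 (h2 y1 y2)) ->
  (forall y1 y2, continuity_2d_pt h y1 y2 /\ continuity_2d_pt h1 y1 y2 /\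
                 continuity_2d_pt h2 y1 y2) ->
  C1_on2 V h.
Proof.
  intros D1 D2 C y1 y2 _. destruct (C y1 y2) as (Ch & Ch1 & Ch2).
  repeat split.
  - exact Ch.
  - eexists; apply D1.
  - eexists; apply D2.
  - apply (continuity_2d_pt_ext h1); [|exact Ch1].
    intros u v. symmetry. apply is_derive_unique, D1.
  - apply (continuity_2d_pt_ext h2); [|exact Ch2].
    intros u v. symmetry. apply is_derive_unique, D2.
Qed.

Ltac continuity_2d_poly :=
  repeat first [ apply continuity_2d_pt_id1 | apply continuity_2d_pt_id2
               | apply continuity_2d_pt_const | apply continuity_2d_pt_plus
               | apply continuity_2d_pt_mult ].

Lemma e1_2_quadratic2 (c : R) : e1_2 (quadratic2 c) = fun y1 _ => 2 * c * y1.
Proof.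
  do 2 (apply functional_extensionality; intro).
  apply is_derive_unique. unfold quadratic2. auto_derive; auto; ring.
Qed.

Lemma e2_2_quadratic2 (c : R) : e2_2 (quadratic2 c) = fun _ y2 => 2 * c * y2.
Proof.
  do 2 (apply functional_extensionality; intro).
  apply is_derive_unique. unfold quadratic2. auto_derive; auto; ring.
Qed.

Lemma C2_on2_quadratic2 (V : R -> R -> Prop) (c : R) : C2_on2 V (quadratic2 c).
Proof.
  unfold C2_on2. rewrite e1_2_quadratic2, e2_2_quadratic2.
  split; [|split].
  - apply (C1_on2_of_is_derive _ _ (fun y1 _ => 2 * c * y1) (fun _ y2 => 2 * c * y2));
      intros; [unfold quadratic2; auto_derive; auto; ring ..|].
    unfold quadratic2; repeat split; continuity_2d_poly.
  - apply (C1_on2_of_is_derive _ _ (fun _ _ => 2 * c) (fun _ _ => 0));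
      intros; [auto_derive; auto; ring .. | repeat split; continuity_2d_poly].
  - apply (C1_on2_of_is_derive _ _ (fun _ _ => 0) (fun _ _ => 2 * c));
      intros; [auto_derive; auto; ring .. | repeat split; continuity_2d_poly].
Qed.

Lemma laplacian2_quadratic2 (c y1 y2 : R) : laplacian2 (quadratic2 c) y1 y2 = 4 * c.
Proof.
  unfold laplacian2. rewrite e1_2_quadratic2, e2_2_quadratic2.
  unfold e1_2, e2_2.
  rewrite !(is_derive_unique (fun t => 2 * c * t) _ (2 * c)) by (auto_derive; auto; ring).
  ring.
Qed.

Lemma C1_on2_slice (G : R -> R -> R -> R) (x0 : R) (V : R -> R -> Prop) :
  (forall y1 y2, V y1 y2 -> C1_at3 G x0 y1 y2) -> C1_on2 V (G x0).
Proof.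
  intros HG y1 y2 Hy. destruct (HG _ _ Hy) as (C & _ & D1 & D2 & _ & C1 & C2).
  repeat split; try assumption.
  - exact (proj2 (proj2 (continuous3_at_slices _ _ _ _ C))).
  - exact (proj2 (proj2 (continuous3_at_slices _ _ _ _ C1))).
  - exact (proj2 (proj2 (continuous3_at_slices _ _ _ _ C2))).
Qed.

Lemma C2_on3_slice (Om : R -> R -> R -> Prop) (F : R -> R -> R -> R) (x0 : R)
    (V : R -> R -> Prop) :
  C2_on3 Om F -> (forall y1 y2, V y1 y2 -> Om x0 y1 y2) -> C2_on2 V (F x0).
Proof.
  intros HC HV.
  split; [|split];
    [apply (C1_on2_slice F) | apply (C1_on2_slice (d1 F)) | apply (C1_on2_slice (d2 F))];
    intros y1 y2 Hy; apply (C2_on3_C1_at3 _ _ _ _ _ HC (HV _ _ Hy)).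
Qed.

Section Ball.
Variables p0 p1 p2 r : R.

Lemma ball3_const0 (G : R -> R -> R -> R) :
  (forall x0 x1 x2, ball3 p0 p1 p2 r x0 x1 x2 -> is_derive (fun t => G t x1 x2) x0 0) ->
  forall x0 x1 x2, ball3 p0 p1 p2 r x0 x1 x2 -> G x0 x1 x2 = G p0 x1 x2.
Proof.
  intros HG x0 x1 x2 (H0 & H1 & H2).
  apply (is_derive_0_const (fun t => G t x1 x2) p0 r x0); [|exact H0].
  intros t Ht. apply HG. repeat split; assumption.
Qed.

Lemma ball3_const1 (G : R -> R -> R -> R) :
  (forall x0 x1 x2, ball3 p0 p1 p2 r x0 x1 x2 -> is_derive (fun t => G x0 t x2) x1 0) ->
  forall x0 x1 x2, ball3 p0 p1 p2 r x0 x1 x2 -> G x0 x1 x2 = G x0 p1 x2.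
Proof.
  intros HG x0 x1 x2 (H0 & H1 & H2).
  apply (is_derive_0_const (fun t => G x0 t x2) p1 r x1); [|exact H1].
  intros t Ht. apply HG. repeat split; assumption.
Qed.

Lemma ball3_const2 (G : R -> R -> R -> R) :
  (forall x0 x1 x2, ball3 p0 p1 p2 r x0 x1 x2 -> is_derive (fun t => G x0 x1 t) x2 0) ->
  forall x0 x1 x2, ball3 p0 p1 p2 r x0 x1 x2 -> G x0 x1 x2 = G x0 x1 p2.
Proof.
  intros HG x0 x1 x2 (H0 & H1 & H2).
  apply (is_derive_0_const (fun t => G x0 x1 t) p2 r x2); [|exact H2].
  intros t Ht. apply HG. repeat split; assumption.
Qed.

Variable F : R -> R -> R -> R.
Hypothesis Hr : 0 < r.
Hypothesis HC : C2_on3 (ball3 p0 p1 p2 r) F.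
Hypothesis HZ : forall x0 x1 x2, ball3 p0 p1 p2 r x0 x1 x2 -> inframonogenic_system F x0 x1 x2.

Let square (y1 y2 : R) : Prop := Rabs (y1 - p1) < r /\ Rabs (y2 - p2) < r.

Lemma Rabs_sub_diag_lt (a : R) : Rabs (a - a) < r.
Proof. rewrite Rminus_eq_0, Rabs_R0. exact Hr. Qed.

Lemma ball3_cross_derivatives_0 x0 x1 x2 : ball3 p0 p1 p2 r x0 x1 x2 ->
  is_derive (fun t => d0 F x0 t x2) x1 0 /\ is_derive (fun t => d0 F x0 x1 t) x2 0 /\
  is_derive (fun t => d1 F t x1 x2) x0 0 /\ is_derive (fun t => d2 F t x1 x2) x0 0.
Proof.
  intro Hx. destruct (HZ _ _ _ Hx) as (Z10 & Z20 & Z01 & Z02 & _).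
  destruct (C2_on3_C1_at3 _ _ _ _ _ HC Hx) as (_ & H0 & H1 & H2).
  destruct (C1_at3_is_derive _ _ _ _ H0) as (_ & D10 & D20).
  destruct (C1_at3_is_derive _ _ _ _ H1) as (D01 & _).
  destruct (C1_at3_is_derive _ _ _ _ H2) as (D02 & _).
  rewrite Z10 in D10; rewrite Z20 in D20; rewrite Z01 in D01; rewrite Z02 in D02.
  exact (conj D10 (conj D20 (conj D01 D02))).
Qed.

Lemma ball3_d0_indep x0 x1 x2 :
  ball3 p0 p1 p2 r x0 x1 x2 -> d0 F x0 x1 x2 = d0 F x0 p1 p2.
Proof.
  intro Hx.
  assert (Hx' : ball3 p0 p1 p2 r x0 p1 x2)
    by (destruct Hx as (H0 & _ & H2); repeat split; auto using Rabs_sub_diag_lt).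
  transitivity (d0 F x0 p1 x2).
  - apply (ball3_const1 (d0 F)); [|exact Hx].
    intros y0 y1 y2 Hy. apply (ball3_cross_derivatives_0 _ _ _ Hy).
  - apply (ball3_const2 (d0 F)); [|exact Hx'].
    intros y0 y1 y2 Hy. apply (ball3_cross_derivatives_0 _ _ _ Hy).
Qed.

Lemma ball3_d1_indep x0 x1 x2 :
  ball3 p0 p1 p2 r x0 x1 x2 -> d1 F x0 x1 x2 = d1 F p0 x1 x2.
Proof.
  apply (ball3_const0 (d1 F)).
  intros y0 y1 y2 Hy. apply (ball3_cross_derivatives_0 _ _ _ Hy).
Qed.

Lemma ball3_d2_indep x0 x1 x2 :
  ball3 p0 p1 p2 r x0 x1 x2 -> d2 F x0 x1 x2 = d2 F p0 x1 x2.
Proof.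
  apply (ball3_const0 (d2 F)).
  intros y0 y1 y2 Hy. apply (ball3_cross_derivatives_0 _ _ _ Hy).
Qed.

Lemma ball3_d00_indep x0 x1 x2 :
  ball3 p0 p1 p2 r x0 x1 x2 -> d0 (d0 F) x0 x1 x2 = d0 (d0 F) x0 p1 p2.
Proof.
  intros (H0 & H1 & H2). unfold d0 at 1 3. apply Derive_ext_loc.
  generalize (locally_Rabs_lt p0 r x0 H0); apply filter_imp.
  intros t Ht. apply ball3_d0_indep. repeat split; assumption.
Qed.

Lemma ball3_d11_indep x0 x1 x2 :
  ball3 p0 p1 p2 r x0 x1 x2 -> d1 (d1 F) x0 x1 x2 = d1 (d1 F) p0 x1 x2.
Proof.
  intros (H0 & H1 & H2). unfold d1 at 1 3. apply Derive_ext_loc.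
  generalize (locally_Rabs_lt p1 r x1 H1); apply filter_imp.
  intros t Ht. apply ball3_d1_indep. repeat split; assumption.
Qed.

Lemma ball3_d22_indep x0 x1 x2 :
  ball3 p0 p1 p2 r x0 x1 x2 -> d2 (d2 F) x0 x1 x2 = d2 (d2 F) p0 x1 x2.
Proof.
  intros (H0 & H1 & H2). unfold d2 at 1 3. apply Derive_ext_loc.
  generalize (locally_Rabs_lt p2 r x2 H2); apply filter_imp.
  intros t Ht. apply ball3_d2_indep. repeat split; assumption.
Qed.

Lemma ball3_separation x0 x1 x2 :
  ball3 p0 p1 p2 r x0 x1 x2 -> d0 (d0 F) x0 p1 p2 = laplacian2 (F p0) x1 x2.
Proof.
  intro Hx. destruct (HZ _ _ _ Hx) as (_ & _ & _ & _ & L).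
  rewrite <- (ball3_d00_indep _ _ _ Hx), L, (ball3_d11_indep _ _ _ Hx), (ball3_d22_indep _ _ _ Hx).
  reflexivity.
Qed.

Lemma ball3_d00_axis_const x0 :
  Rabs (x0 - p0) < r -> d0 (d0 F) x0 p1 p2 = d0 (d0 F) p0 p1 p2.
Proof.
  intro H0.
  rewrite (ball3_separation x0 p1 p2), (ball3_separation p0 p1 p2);
    [reflexivity | repeat split; auto using Rabs_sub_diag_lt ..].
Qed.

Lemma ball3_laplacian2_slice y1 y2 :
  square y1 y2 -> laplacian2 (F p0) y1 y2 = d0 (d0 F) p0 p1 p2.
Proof.
  intros [H1 H2]. symmetry.
  apply ball3_separation. repeat split; auto using Rabs_sub_diag_lt.
Qed.

Lemma ball3_F_split x0 x1 x2 : ball3 p0 p1 p2 r x0 x1 x2 ->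
  F x0 x1 x2 = F x0 p1 p2 + F p0 x1 x2 - F p0 p1 p2.
Proof.
  intro Hx.
  enough (E : F x0 x1 x2 - F x0 p1 p2 = F p0 x1 x2 - F p0 p1 p2) by lra.
  apply (ball3_const0 (fun a b c => F a b c - F a p1 p2)); [|exact Hx].
  intros y0 y1 y2 Hy.
  assert (Hy' : ball3 p0 p1 p2 r y0 p1 p2)
    by (destruct Hy as (H0 & _); repeat split; auto using Rabs_sub_diag_lt).
  replace 0 with (d0 F y0 y1 y2 - d0 F y0 p1 p2) by (rewrite (ball3_d0_indep _ _ _ Hy); ring).
  apply is_derive_Rminus.
  - apply C1_at3_is_derive, (C2_on3_C1_at3 _ _ _ _ _ HC Hy).
  - apply C1_at3_is_derive, (C2_on3_C1_at3 _ _ _ _ _ HC Hy').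
Qed.

Lemma ball3_F_axis0 x0 : Rabs (x0 - p0) < r ->
  F x0 p1 p2 = F p0 p1 p2 + d0 F p0 p1 p2 * (x0 - p0)
               + d0 (d0 F) p0 p1 p2 / 2 * (x0 - p0) ^ 2.
Proof.
  apply (taylor_const_second_derive (fun t => F t p1 p2) (fun t => d0 F t p1 p2)).
  - intros t Ht. apply C1_at3_is_derive, (C2_on3_C1_at3 _ _ _ _ _ HC).
    repeat split; auto using Rabs_sub_diag_lt.
  - intros t Ht. rewrite <- (ball3_d00_axis_const t Ht).
    apply C1_at3_is_derive, (C2_on3_C1_at3 _ _ _ _ _ HC).
    repeat split; auto using Rabs_sub_diag_lt.
Qed.

Lemma ball3_slice_harmonic :
  harmonic_on2 square (fun y1 y2 => F p0 y1 y2 - quadratic2 (d0 (d0 F) p0 p1 p2 / 4) y1 y2).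
Proof.
  assert (HV := open2_square p1 p2 r).
  assert (Hg : C2_on2 square (F p0)).
  { apply (C2_on3_slice (ball3 p0 p1 p2 r)); [exact HC|].
    intros y1 y2 [H1 H2]. repeat split; auto using Rabs_sub_diag_lt. }
  assert (Hq := C2_on2_quadratic2 square (d0 (d0 F) p0 p1 p2 / 4)).
  apply harmonic_on2_intro; [exact HV | exact (C2_on2_minus _ HV _ _ Hg Hq) |].
  intros y1 y2 Hy.
  rewrite (laplacian2_minus _ HV _ _ Hg Hq _ _ Hy), laplacian2_quadratic2,
    (ball3_laplacian2_slice _ _ Hy).
  field.
Qed.

Lemma ball3_representation :
  exists (c0 c1 c2 : R) (h : R -> R -> R),
    harmonic_on2 square h /\
    forall x0 x1 x2, ball3 p0 p1 p2 r x0 x1 x2 ->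
      F x0 x1 x2 = c0 * (2 * x0 ^ 2 + x1 ^ 2 + x2 ^ 2) + c1 * x0 + c2 + h x1 x2.
Proof.
  set (K := d0 (d0 F) p0 p1 p2). set (a := d0 F p0 p1 p2).
  exists (K / 4), (a - K * p0), (K / 2 * p0 ^ 2 - a * p0),
    (fun y1 y2 => F p0 y1 y2 - quadratic2 (K / 4) y1 y2).
  split; [exact ball3_slice_harmonic|].
  intros x0 x1 x2 Hx.
  rewrite (ball3_F_split _ _ _ Hx), (ball3_F_axis0 _ (proj1 Hx)).
  unfold quadratic2, K, a; cbv beta. field.
Qed.

End Ball.

Theorem proposition2p5 (Om : R -> R -> R -> Prop) (f0 : R -> R -> R -> R) :
  domain3 Om ->
  C2_on3 Om f0 ->
  (forall x0 x1 x2, Om x0 x1 x2 ->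
     dbar_both (fun a b c => qreal (f0 a b c)) x0 x1 x2 = qzero) ->
  forall p0 p1 p2, Om p0 p1 p2 ->
    exists r : R, 0 < r /\
      (forall x0 x1 x2, ball3 p0 p1 p2 r x0 x1 x2 -> Om x0 x1 x2) /\
      exists (c0 c1 c2 : R) (h : R -> R -> R),
        harmonic_on2 (fun y1 y2 => Rabs (y1 - p1) < r /\ Rabs (y2 - p2) < r) h /\
        forall x0 x1 x2, ball3 p0 p1 p2 r x0 x1 x2 ->
          f0 x0 x1 x2 =
            c0 * (2 * x0 ^ 2 + x1 ^ 2 + x2 ^ 2) + c1 * x0 + c2 + h x1 x2.
Proof.
  intros [Hopen _] HC Hinfra p0 p1 p2 Hp.
  destruct (Hopen _ _ _ Hp) as [r [Hr Hball]].
  exists r. split; [exact Hr|]. split; [exact Hball|].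
  apply ball3_representation; [exact Hr | exact (C2_on3_mono _ _ _ Hball HC) |].
  intros x0 x1 x2 Hx.
  apply (inframonogenic_real_system Om); auto.
Qed.
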